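(* Let $N$ be the generalised Cartan matrix of type $A_r$ ($r\ge1$) or $A^{(1)}_{r-1}$ ($r\ge2$), let $A=[A_{ij}]$ be a solution matrix of $N$, and let $\mathfrak h$, $\alpha_i$, $Z$, $\mathcal A$, $v_1,\dots,v_r$ be as in the context, with $F:\mathfrak h\to\mathrm{Der}(\mathcal A)$ a Lie algebra homomorphism satisfying $\ker F=Z$ and $F(H)(v_i)=\alpha_i(H)v_i$. Then there exist unique $\delta_1,\dots,\delta_r\in\mathrm{Im}\,F$ with $\alpha_i(\delta_j)=A_{ij}$ for all $i,j$; setting $\delta_{-i}=\frac{1}{A_{ii}}\bigl(-F(H_i)+\frac{1}{A_{ii}}\delta_i\bigr)$, the elements $\mathbf X_i=v_i\delta_i$, $\mathbf X_{-i}=v_i^{-1}\delta_{-i}$ satisfy $[\mathbf X_i,\mathbf X_{-i}]=F(H_i)$ and $[\mathbf X_i,\mathbf X_{-j}]=0$ for $i\ne j$; hence $F(H_a)$, $\mathbf X_{\pm i}$ satisfy all the defining relations (a)–(e) of $\hat{\mathfrak g}(N)$ (Problem 1 has a solution).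
   Context: The generalised Cartan matrix of type $A_r$ ($r\ge1$) is the $r\times r$ matrix $N=[n(i,j)]$ with $2$ on the diagonal, $-1$ in positions $(i,i\pm1)$ and $0$ elsewhere; that of type $A^{(1)}_1$ is $\begin{pmatrix}2&-2\\-2&2\end{pmatrix}$; that of type $A^{(1)}_{r-1}$ ($r\ge3$) has $2$ on the diagonal, $-1$ in positions $(i,i\pm1)$ and $(1,r),(r,1)$, $0$ elsewhere. A solution matrix of $N$ is an $r\times r$ complex matrix $A=[A_{ij}]$ with all $A_{ii}\ne0$ such that $A'=[A_{ij}/A_{jj}]$ satisfies: $A'_{ij}\in\{0,-1\}$ for $i\ne j$; $A'_{ij}+A'_{ji}=n(j,i)$; and if $A'_{ij}=-1$ then the $i$-th row and $j$-th column of $A'$ have no other entries $-1$. Let $s$ be the corank of $N$ ($s=0$ for $A_r$, $s=1$ for $A^{(1)}_{r-1}$), $\mathfrak h$ the complex vector space with basis $H_1,\dots,H_{r+s}$, $\alpha_1,\dots,\alpha_r\in\mathfrak h^*$ linearly independent with $\alpha_j(H_i)=n(i,j)$ ($1\le i,j\le r$), and $Z=\bigcap_i\ker\alpha_i$. Since $\ker F\subseteq Z$, each $\alpha_i$ induces a linear form on $\mathrm{Im}\,F$ via $\alpha_i(F(H))=\alpha_i(H)$. $\mathcal A$ is a complex commutative algebra, $\mathrm{Der}(\mathcal A)$ its Lie algebra of derivations; for $a\in\mathcal A$, $D\in\mathrm{Der}(\mathcal A)$, $aD$ is $b\mapsto aD(b)$; $v_1,\dots,v_r\in\mathcal A$ are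 invertible. The defining relations of $\hat{\mathfrak g}(N)$, for $\mathbf H_a=F(H_a)$: (a) $[\mathbf H_a,\mathbf H_b]=0$; (b) $[\mathbf X_i,\mathbf X_{-i}]=\mathbf H_i$, $[\mathbf X_i,\mathbf X_{-j}]=0$ ($i\ne j$); (c) $[\mathbf H_a,\mathbf X_{\pm j}]=\pm\alpha_j(H_a)\mathbf X_{\pm j}$; (d) $\mathrm{ad}(\mathbf X_i)^{1-n(i,j)}(\mathbf X_j)=0$ ($i\ne j$); (e) $\mathrm{ad}(\mathbf X_{-i})^{1-n(i,j)}(\mathbf X_{-j})=0$ ($i\ne j$). *)

From HB Require Import structures.
From mathcomp Require Import all_boot all_order all_algebra.
From mathcomp Require Import complex.
From mathcomp Require Import reals.
Set Implicit Arguments. Unset Strict Implicit. Unset Printing Implicit Defensive.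
Import Order.TTheory GRing.Theory Num.Theory.
Local Open Scope ring_scope.

(* Generalised Cartan matrices, indices 0-based: i, j : 'I_r. *)
Definition cartanA (r : nat) (i j : 'I_r) : int :=
  if i == j then (2 : int)
  else if (i.+1 == j :> nat) || (j.+1 == i :> nat) then (-1 : int) else (0 : int).

Definition cartanA1 (r : nat) (i j : 'I_r) : int :=
  if i == j then (2 : int)
  else if r == 2%N then (-2 : int)
  else if [|| (i.+1 == j :> nat), (j.+1 == i :> nat),
             ((i == 0 :> nat) && (j == r.-1 :> nat)) |
             ((j == 0 :> nat) && (i == r.-1 :> nat))]
       then (-1 : int) else (0 : int).

(* aff = false : type A_r (corank s = 0); aff = true : type A^(1)_(r-1) (s = 1) *)
Definition cartan (aff : bool) (r : nat) : 'I_r -> 'I_r -> int :=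
  if aff then @cartanA1 r else @cartanA r.
Arguments cartan aff r : clear implicits.

Definition solution_matrix (K : fieldType) (r : nat)
    (N : 'I_r -> 'I_r -> int) (A : 'M[K]_r) : Prop :=
  let A' := fun i j => A i j / A j j in
  (forall i, A i i != 0) /\
  (forall i j, i != j -> A' i j = 0 \/ A' i j = -1) /\
  (forall i j, i != j -> A' i j + A' j i = (N j i)%:~R) /\
  (forall i j, i != j -> A' i j = -1 ->
     (forall k, k != j -> A' i k != -1) /\ (forall k, k != i -> A' k j != -1)).

Definition is_derivation (K : fieldType) (Alg : comAlgType K) (D : Alg -> Alg) : Prop :=
  (forall (c : K) (a b : Alg), D (c *: a + b) = c *: D a + D b) /\
  (forall a b : Alg, D (a * b) = a * D b + D a * b).

Definition comm (T : pzRingType) (D1 D2 : T -> T) : T -> T :=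
  fun b => D1 (D2 b) - D2 (D1 b).
Definition ad_pow (T : pzRingType) (k : nat) (X Y : T -> T) : T -> T :=
  iter k (comm X) Y.

(* basis vector H_a of h = K^(r+s) (row vectors) *)
Definition Hb (K : fieldType) (m : nat) (a : 'I_m) : 'rV[K]_m := delta_mx 0 a.
Arguments Hb {K m} a.

(* alpha_j(H), where row j of the matrix alpha holds the coordinates of
   alpha_j in the dual basis of H_1..H_(r+s) *)
Definition alphaf (K : fieldType) (r m : nat) (alpha : 'M[K]_(r, m))
    (j : 'I_r) (H : 'rV[K]_m) : K :=
  \sum_(a < m) H 0 a * alpha j a.

Definition delta_neg (K : fieldType) (Alg : comAlgType K) (r s : nat)
    (A : 'M[K]_r) (F : 'rV[K]_(r + s) -> Alg -> Alg)
    (delta : 'I_r -> Alg -> Alg) (i : 'I_r) : Alg -> Alg :=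
  fun b => (A i i)^-1 *: (- F (Hb (lshift s i)) b + (A i i)^-1 *: delta i b).

Definition Xpos (K : fieldType) (Alg : comAlgType K) (r : nat)
    (v : 'I_r -> Alg) (delta : 'I_r -> Alg -> Alg) (i : 'I_r) : Alg -> Alg :=
  fun b => v i * delta i b.
Definition Xneg (K : fieldType) (Alg : comAlgType K) (r s : nat)
    (A : 'M[K]_r) (F : 'rV[K]_(r + s) -> Alg -> Alg)
    (vinv : 'I_r -> Alg) (delta : 'I_r -> Alg -> Alg) (i : 'I_r) : Alg -> Alg :=
  fun b => vinv i * delta_neg A F delta i b.

From HB Require Import structures.
From mathcomp Require Import all_boot all_order all_algebra.
From mathcomp Require Import complex.
From mathcomp Require Import reals.
From mathcomp Require Import ring.
Set Implicit Arguments. Unset Strict Implicit. Unset Printing Implicit Defensive.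
Import Order.TTheory GRing.Theory Num.Theory.
Local Open Scope ring_scope.

(* Everything reduces to computations in the Cartan subalgebra h.  If u and w
   are weight vectors of the torus F(h), with weights wu and ww, then
   [u F(D), w F(E)] = u w F(ww(D) E - wu(E) D), and F(H) is determined by the
   values alpha_k(H) because ker F = Z.  Choosing H_j^+ with alpha_i(H_j^+) = A_ij
   and writing A' for the column-normalised solution matrix, so that
   N = A' + A'^T, the element H_i^- giving delta_{-i} has alpha_k(H_i^-) =
   -A'_ik / A_ii.  Then [X_i, X_-i] = F(H_i) holds on the nose, while for i <> j
   the bracket [X_i, X_-j] has roots A_ji / A_jj (A'_jk + A'_ki), which vanish
   because a -1 in A' is alone in its row and its column.  The Serre relations
   are the sl2 computation: the h-part of ad(u F(D))^n (w F(E)) stays in the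
   plane spanned by D and E, and its E-coordinate acquires the factor
   p wu(D) + ww(D), which is 0 for p = -A'_ji; one more bracket kills the
   remaining multiple of D, which is absent when wu(E) = 0, i.e. A'_ij = 0.
   Hence 1 - N_ij = 1 + p - A'_ij brackets suffice. *)

Section AdVec.

Variables (K : fieldType) (V : lmodType K) (lam : V -> K) (c : K) (D E : V).
Hypothesis lam_linear : forall a (u w : V), lam (a *: u + w) = a * lam u + lam w.

(* With [lam := wu] and [c := ww D], this is the [h]-part of
   [ad(u F(D))^n (w F(E))]; see [ad_pow_mulF]. *)
Fixpoint ad_vec (n : nat) : V :=
  if n is n'.+1 then (n'%:R * lam D + c) *: ad_vec n' - lam (ad_vec n') *: D
  else E.

Lemma ad_vecS n :
  ad_vec n.+1 = (n%:R * lam D + c) *: ad_vec n - lam (ad_vec n) *: D.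
Proof. by []. Qed.

Let ad_coef n := \prod_(k < n) (k%:R * lam D + c).

Let lam0 : lam 0 = 0.
Proof.
have := lam_linear 1 0 0; rewrite scale1r addr0 mul1r => h.
by apply/(addrI (lam 0)); rewrite addr0 -h.
Qed.

Let lamZ a u : lam (a *: u) = a * lam u.
Proof. by rewrite -[a *: u]addr0 lam_linear lam0 addr0. Qed.

Lemma ad_vec_span n : exists y, ad_vec n = ad_coef n *: E + y *: D.
Proof.
elim: n => [|n [y IH]] /=; first by exists 0; rewrite /ad_coef big_ord0 scale1r scale0r addr0.
exists ((n%:R * lam D + c) * y - lam (ad_vec n)).
rewrite IH /ad_coef big_ord_recr /= scalerDr !scalerA scalerBl addrA.
by rewrite [_ * (_ + c)]mulrC.
Qed.

Lemma ad_vec_kerE n : lam E = 0 -> ad_vec n = ad_coef n *: E.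
Proof.
move=> lamE; elim: n => [|n /= ->]; first by rewrite /ad_coef big_ord0 scale1r.
by rewrite lamZ lamE mulr0 scale0r subr0 scalerA /ad_coef big_ord_recr /= mulrC.
Qed.

Variable p : nat.
Hypothesis c_root : c = - (p%:R * lam D).

Lemma ad_coef_eq0 : ad_coef p.+1 = 0.
Proof. by rewrite /ad_coef big_ord_recr /= c_root subrr mulr0. Qed.

Lemma ad_vec_nilpotent (q : bool) : q || (lam E == 0) -> ad_vec (p + q).+1 = 0.
Proof.
case: q => [_ | /eqP lamE]; last by rewrite addn0 ad_vec_kerE // ad_coef_eq0 scale0r.
have [y ey] := ad_vec_span p.+1.
rewrite addn1 ad_vecS ey ad_coef_eq0 scale0r add0r lamZ c_root scalerA -scalerBl.
suff -> : (p.+1%:R * lam D - p%:R * lam D) * y - y * lam D = 0 by rewrite scale0r.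
by rewrite -natr1; ring.
Qed.

End AdVec.

Lemma comm_ext (T : pzRingType) (X X' Y Y' : T -> T) :
  X =1 X' -> Y =1 Y' -> comm X Y =1 comm X' Y'.
Proof. by move=> eX eY x; rewrite /comm !eX !eY. Qed.

Lemma ad_pow_ext (T : pzRingType) k (X X' Y Y' : T -> T) :
  X =1 X' -> Y =1 Y' -> ad_pow k X Y =1 ad_pow k X' Y'.
Proof.
move=> eX; elim: k Y Y' => [|k IH] Y Y' eY; first exact: eY.
by apply: comm_ext => // y; apply: IH.
Qed.

Section DerivationAction.

Variables (K : fieldType) (Alg : comAlgType K) (m : nat).
Variable F : 'rV[K]_m -> Alg -> Alg.
Hypothesis F_linear : forall (c : K) (H1 H2 : 'rV[K]_m) (b : Alg),
  F (c *: H1 + H2) b = c *: F H1 b + F H2 b.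
Hypothesis F_der : forall H, is_derivation (F H).
Hypothesis F_comm : forall H1 H2 (b : Alg), comm (F H1) (F H2) b = 0.

Lemma Flinear0 b : F 0 b = 0.
Proof.
have := F_linear 1 0 0 b; rewrite scaler0 addr0 scale1r => h.
by apply/(addrI (F 0 b)); rewrite addr0 -h.
Qed.

Lemma FlinearD H1 H2 b : F (H1 + H2) b = F H1 b + F H2 b.
Proof. by have := F_linear 1 H1 H2 b; rewrite !scale1r. Qed.

Lemma FlinearZ c H b : F (c *: H) b = c *: F H b.
Proof. by rewrite -[c *: H]addr0 F_linear Flinear0 addr0. Qed.

Lemma FlinearN H b : F (- H) b = - F H b.
Proof. by rewrite -scaleN1r FlinearZ scaleN1r. Qed.

Lemma FlinearB H1 H2 b : F (H1 - H2) b = F H1 b - F H2 b.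
Proof. by rewrite FlinearD FlinearN. Qed.

Lemma derF1 H : F H 1 = 0.
Proof.
have [_ /(_ 1 1)] := F_der H; rewrite !mul1r mulr1 => h.
by apply/(addrI (F H 1)); rewrite addr0 -h.
Qed.

Lemma F_commute H1 H2 b : F H1 (F H2 b) = F H2 (F H1 b).
Proof. by apply/eqP; rewrite -subr_eq0; apply/eqP/F_comm. Qed.

Definition is_weight_vector (w : 'rV[K]_m -> K) (a : Alg) :=
  forall H, F H a = w H *: a.

Lemma weight_vectorM wa wb a b :
  is_weight_vector wa a -> is_weight_vector wb b ->
  is_weight_vector (fun H => wa H + wb H) (a * b).
Proof.
move=> ha hb H; have [_ ->] := F_der H.
by rewrite ha hb scalerDl scalerAl scalerAr addrC.
Qed.

Lemma weight_vectorV wa a b :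
  a * b = 1 -> is_weight_vector wa a -> is_weight_vector (fun H => - wa H) b.
Proof.
move=> ab1 ha H; have [_ /(_ a b)] := F_der H.
rewrite ab1 derF1 ha -scalerAl ab1 => /esym/eqP; rewrite addr_eq0 => /eqP e.
have -> : F H b = b * (a * F H b) by rewrite mulrA (mulrC b) ab1 mul1r.
by rewrite e mulrN -scalerAr mulr1 scaleNr.
Qed.

Lemma weight_vectorXM n wu ww u w :
  is_weight_vector wu u -> is_weight_vector ww w ->
  is_weight_vector (fun H => n%:R * wu H + ww H) (u ^+ n * w).
Proof.
move=> hu hw; elim: n => [|n IH] H; first by rewrite mul0r add0r expr0 mul1r hw.
by rewrite exprS -mulrA (weight_vectorM hu IH) -natr1 mulrDl mul1r addrCA addrA.
Qed.

Definition mulF (a : Alg) (H : 'rV[K]_m) : Alg -> Alg := fun b => a * F H b.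

Lemma mulF0 a b : mulF a 0 b = 0.
Proof. by rewrite /mulF Flinear0 mulr0. Qed.

Lemma comm_F_mulF ww w H E b :
  is_weight_vector ww w -> comm (F H) (mulF w E) b = ww H *: mulF w E b.
Proof.
move=> hw; rewrite /comm /mulF; have [_ ->] := F_der H.
by rewrite F_commute hw addrAC subrr add0r -scalerAl.
Qed.

Lemma comm_mulF wa wb a b H1 H2 :
  is_weight_vector wa a -> is_weight_vector wb b ->
  comm (mulF a H1) (mulF b H2) =1 mulF (a * b) (wb H1 *: H2 - wa H2 *: H1).
Proof.
move=> ha hb x; rewrite /mulF /comm.
have [_ ->] := F_der H1; have [_ ->] := F_der H2.
rewrite ha hb FlinearB !FlinearZ F_commute.
rewrite -[wb H1 *: b]mulr_algl -[wa H2 *: a]mulr_algl.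
rewrite -[wb H1 *: F H2 x]mulr_algl -[wa H2 *: F H1 x]mulr_algl; ring.
Qed.

Lemma ad_pow_mulF n wu ww u w D E :
  is_weight_vector wu u -> is_weight_vector ww w ->
  ad_pow n (mulF u D) (mulF w E) =1 mulF (u ^+ n * w) (ad_vec wu (ww D) D E n).
Proof.
move=> hu hw; elim: n => [|n IH] x; first by rewrite /= expr0 mul1r.
rewrite /ad_pow iterS -/(ad_pow n _ _) (comm_ext (frefl _) IH).
by rewrite (comm_mulF _ _ hu (weight_vectorXM n hu hw)) mulrA -exprS.
Qed.

Lemma ad_pow_mulF_nilpotent wu ww u w D E (p : nat) (q : bool) :
  (forall c H1 H2, wu (c *: H1 + H2) = c * wu H1 + wu H2) ->
  is_weight_vector wu u -> is_weight_vector ww w ->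
  ww D = - (p%:R * wu D) -> q || (wu E == 0) ->
  forall b, ad_pow (p + q).+1 (mulF u D) (mulF w E) b = 0.
Proof.
move=> wu_linear hu hw wwD hq b.
by rewrite (ad_pow_mulF _ _ _ hu hw) (ad_vec_nilpotent wu_linear wwD hq) mulF0.
Qed.

End DerivationAction.

Section RootValues.

Variables (K : fieldType) (r m : nat) (alpha : 'M[K]_(r, m)).

Lemma alphafE j H : alphaf alpha j H = (H *m alpha^T) 0 j.
Proof. by rewrite /alphaf mxE; apply: eq_bigr => a _; rewrite mxE. Qed.

Lemma alphaf_linear j c H1 H2 :
  alphaf alpha j (c *: H1 + H2) = c * alphaf alpha j H1 + alphaf alpha j H2.
Proof. by rewrite !alphafE mulmxDl -scalemxAl !mxE. Qed.

Lemma alphafD j H1 H2 :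
  alphaf alpha j (H1 + H2) = alphaf alpha j H1 + alphaf alpha j H2.
Proof. by have := alphaf_linear j 1 H1 H2; rewrite scale1r mul1r. Qed.

Lemma alphafZ j c H : alphaf alpha j (c *: H) = c * alphaf alpha j H.
Proof. by rewrite !alphafE -scalemxAl mxE. Qed.

Lemma alphafN j H : alphaf alpha j (- H) = - alphaf alpha j H.
Proof. by rewrite -scaleN1r alphafZ mulN1r. Qed.

Lemma alphafB j H1 H2 :
  alphaf alpha j (H1 - H2) = alphaf alpha j H1 - alphaf alpha j H2.
Proof. by rewrite alphafD alphafN. Qed.

Lemma alphaf_onto n (B : 'M[K]_(r, n)) :
  row_free alpha -> exists Hs : 'I_n -> 'rV_m, forall i j, alphaf alpha i (Hs j) = B i j.
Proof.
move=> alpha_free; have /submxP [C BE] : (B^T <= alpha^T)%MS.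
  by apply: submx_full; rewrite /row_full mxrank_tr.
by exists (fun j => row j C) => i j; rewrite alphafE -row_mul -BE !mxE.
Qed.

End RootValues.

Definition colnorm (K : fieldType) (r : nat) (A : 'M[K]_r) (i j : 'I_r) : K :=
  A i j / A j j.

Section SolutionMatrix.

Variables (K : numFieldType) (r : nat) (N : 'I_r -> 'I_r -> int) (A : 'M[K]_r).
Hypothesis A_sol : solution_matrix N A.
Hypothesis N_diag : forall i, N i i = 2.

Lemma solution_diag_neq0 i : A i i != 0.
Proof. by have [] := A_sol. Qed.

Lemma colnorm_diag i : colnorm A i i = 1.
Proof. by rewrite /colnorm divff ?solution_diag_neq0. Qed.

Lemma colnorm_offdiag i j : i != j -> colnorm A i j = - (A i j != 0)%:R.
Proof.
move=> ij; rewrite /colnorm; have [-> | Aij] := eqVneq (A i j) 0.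
  by rewrite mul0r oppr0.
have [_ [h01 _]] := A_sol; case: (h01 i j ij) => [/eqP|->] //.
by rewrite mulf_eq0 invr_eq0 (negPf Aij) (negPf (solution_diag_neq0 j)).
Qed.

Lemma cartan_colnorm i j : (N i j)%:~R = colnorm A i j + colnorm A j i.
Proof.
have [<- | ij] := eqVneq i j; first by rewrite N_diag colnorm_diag.
have [_ [_ [hsum _]]] := A_sol.
by rewrite -hsum 1?eq_sym // addrC.
Qed.

Lemma colnorm_chain i j k :
  i != j -> A j i != 0 -> colnorm A j k + colnorm A k i = 0.
Proof.
move=> ij Aji; have ji : j != i by rewrite eq_sym.
have Aji' : colnorm A j i = -1 by rewrite colnorm_offdiag // Aji.
have [-> | ki] := eqVneq k i; first by rewrite Aji' colnorm_diag addNr.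
have [-> | kj] := eqVneq k j; first by rewrite Aji' colnorm_diag addrN.
have [_ [_ [_ /(_ j i ji Aji') [row_j col_i]]]] := A_sol.
have jk : j != k by rewrite eq_sym.
have colnorm0 x y : x != y -> colnorm A x y != -1 -> colnorm A x y = 0.
  by move=> xy; rewrite colnorm_offdiag //; case: (_ != 0) => [/negP[]|]; rewrite ?oppr0.
by rewrite (colnorm0 j k jk (row_j k ki)) (colnorm0 k i ki (col_i k kj)) addr0.
Qed.

Lemma cartan_serre_exponent i j :
  i != j -> `|1 - N i j|%N = ((A j i != 0) + (A i j != 0)).+1.
Proof.
move=> ij; have ji : j != i by rewrite eq_sym.
set a := A j i != 0; set b := A i j != 0.
have -> : N i j = - (a + b)%N%:Z.
  apply: (@intr_inj K); rewrite cartan_colnorm !colnorm_offdiag //.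
  by rewrite mulrNz -pmulrn natrD opprD addrC.
by rewrite opprK -PoszD add1n.
Qed.

End SolutionMatrix.

Section ChevalleyRealization.

Variables (K : numFieldType) (r s : nat) (N : 'I_r -> 'I_r -> int).
Variables (A : 'M[K]_r) (alpha : 'M[K]_(r, r + s)).
Variables (Alg : comAlgType K) (v vinv : 'I_r -> Alg).
Variables (F : 'rV[K]_(r + s) -> Alg -> Alg) (Hpos : 'I_r -> 'rV[K]_(r + s)).

Hypothesis N_diag : forall i, N i i = 2.
Hypothesis A_sol : solution_matrix N A.
Hypothesis alpha_N : forall i j, alphaf alpha j (Hb (lshift s i)) = (N i j)%:~R.
Hypothesis v_inv : forall i, v i * vinv i = 1.
Hypothesis F_linear : forall (c : K) (H1 H2 : 'rV[K]_(r + s)) (b : Alg),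
  F (c *: H1 + H2) b = c *: F H1 b + F H2 b.
Hypothesis F_der : forall H, is_derivation (F H).
Hypothesis F_comm : forall H1 H2 (b : Alg), comm (F H1) (F H2) b = 0.
Hypothesis F_ker : forall H, (forall b, F H b = 0) <-> (forall j, alphaf alpha j H = 0).
Hypothesis F_v : forall H i, F H (v i) = alphaf alpha i H *: v i.
Hypothesis alpha_Hpos : forall i j, alphaf alpha i (Hpos j) = A i j.

Lemma F_eq_alphaf H H' :
  (forall k, alphaf alpha k H = alphaf alpha k H') -> F H =1 F H'.
Proof.
move=> eH b; apply/eqP; rewrite -subr_eq0 -(FlinearB F_linear); apply/eqP.
by move: b; apply/F_ker => k; rewrite alphafB eH subrr.
Qed.

Let A_diag i : A i i != 0 := solution_diag_neq0 A_sol i.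

Definition Hneg i := (A i i)^-1 *: (- Hb (lshift s i) + (A i i)^-1 *: Hpos i).

Lemma alphaf_Hneg i k : alphaf alpha k (Hneg i) = - colnorm A i k / A i i.
Proof.
rewrite alphafZ alphafD alphafN alphafZ alpha_N alpha_Hpos (cartan_colnorm A_sol N_diag).
by rewrite /colnorm; field; rewrite !A_diag.
Qed.

Lemma Xneg_mulF i : Xneg A F vinv (fun j => F (Hpos j)) i =1 mulF F (vinv i) (Hneg i).
Proof.
move=> b; rewrite /Xneg /delta_neg /mulF /Hneg.
by rewrite !(FlinearZ F_linear, FlinearD F_linear, FlinearN F_linear).
Qed.

Lemma weight_v i : is_weight_vector F (alphaf alpha i) (v i).
Proof. by move=> H; apply: F_v. Qed.

Lemma weight_vinv i : is_weight_vector F (fun H => - alphaf alpha i H) (vinv i).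
Proof. exact: weight_vectorV (v_inv i) (weight_v i). Qed.

Lemma Xpos_Xneg_bracket i :
  comm (mulF F (v i) (Hpos i)) (mulF F (vinv i) (Hneg i)) =1 F (Hb (lshift s i)).
Proof.
move=> b; rewrite (comm_mulF F_linear F_der F_comm _ _ (weight_v i) (weight_vinv i)).
rewrite /mulF v_inv mul1r; apply: F_eq_alphaf => k.
rewrite alphafB [alphaf _ _ (_ *: Hneg _)]alphafZ alphafZ !alphaf_Hneg !alpha_Hpos alpha_N.
rewrite (cartan_colnorm A_sol N_diag) (colnorm_diag A_sol).
by rewrite /colnorm; field; rewrite !A_diag.
Qed.

Lemma Xpos_Xneg_bracket_offdiag i j : i != j ->
  comm (mulF F (v i) (Hpos i)) (mulF F (vinv j) (Hneg j)) =1 (fun=> 0).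
Proof.
move=> ij b; rewrite (comm_mulF F_linear F_der F_comm _ _ (weight_v i) (weight_vinv j)).
rewrite /mulF (proj2 (F_ker _)) ?mulr0 // => k.
rewrite alphafB [alphaf _ _ (_ *: Hneg _)]alphafZ alphafZ !alphaf_Hneg !alpha_Hpos.
have -> : - A j i * (- colnorm A j k / A j j) - - colnorm A j i / A j j * A k i
    = A j i / A j j * (colnorm A j k + colnorm A k i).
  by rewrite /colnorm; field; rewrite !A_diag.
have [-> | Aji] := eqVneq (A j i) 0; first by rewrite !mul0r.
by rewrite (colnorm_chain A_sol) // mulr0.
Qed.

Lemma F_Xneg_bracket H j b :
  comm (F H) (Xneg A F vinv (fun j => F (Hpos j)) j) b
  = - (alphaf alpha j H *: Xneg A F vinv (fun j => F (Hpos j)) j b).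
Proof.
rewrite (comm_ext (frefl _) (Xneg_mulF j)) Xneg_mulF.
by rewrite (comm_F_mulF F_der F_comm _ _ _ (weight_vinv j)) scaleNr.
Qed.

Lemma Xpos_serre i j : i != j -> forall b,
  ad_pow `|1 - N i j|%N (mulF F (v i) (Hpos i)) (mulF F (v j) (Hpos j)) b = 0.
Proof.
move=> ij; have ji : j != i by rewrite eq_sym.
rewrite (cartan_serre_exponent A_sol N_diag ij).
apply: (ad_pow_mulF_nilpotent F_linear F_der F_comm _ (weight_v i) (weight_v j)).
- exact: alphaf_linear.
- have := colnorm_offdiag A_sol ji; rewrite /colnorm => /(canRL (divfK (A_diag i))).
  by rewrite !alpha_Hpos mulNr.
- by rewrite alpha_Hpos orNb.
Qed.

Lemma Xneg_serre i j : i != j -> forall b,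
  ad_pow `|1 - N i j|%N (mulF F (vinv i) (Hneg i)) (mulF F (vinv j) (Hneg j)) b = 0.
Proof.
move=> ij; rewrite (cartan_serre_exponent A_sol N_diag ij) addnC.
apply: (ad_pow_mulF_nilpotent F_linear F_der F_comm _ (weight_vinv i) (weight_vinv j)).
- by move=> c H1 H2; rewrite alphaf_linear opprD mulrN.
- rewrite !alphaf_Hneg (colnorm_offdiag A_sol ij) (colnorm_diag A_sol); ring.
- rewrite alphaf_Hneg /colnorm; have [-> | //] := eqVneq (A j i) 0.
  by rewrite !(mul0r, oppr0) eq_refl.
Qed.

End ChevalleyRealization.

Lemma cartan_diag aff r (i : 'I_r) : cartan aff r i i = 2.
Proof. by rewrite /cartan; case: aff; rewrite /cartanA1 /cartanA eqxx. Qed.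

Theorem theorem3p14 (R : realType) (aff : bool) (r : nat)
  (hr : ((if aff then 2 else 1) <= r)%N)
  (A : 'M[R[i]]_r)
  (hA : solution_matrix (cartan aff r) A)
  (alpha : 'M[R[i]]_(r, r + aff))
  (halpha_indep : row_free alpha)
  (halpha_N : forall i j : 'I_r,
      alphaf alpha j (Hb (lshift aff i)) = (cartan aff r i j)%:~R)
  (Alg : comAlgType R[i])
  (v vinv : 'I_r -> Alg)
  (hv_inv : forall i, v i * vinv i = 1)
  (F : 'rV[R[i]]_(r + aff) -> Alg -> Alg)
  (hF_lin : forall (c : R[i]) (H1 H2 : 'rV[R[i]]_(r + aff)) (b : Alg),
      F (c *: H1 + H2) b = c *: F H1 b + F H2 b)
  (hF_der : forall H, is_derivation (F H))
  (hF_hom : forall H1 H2 (b : Alg), comm (F H1) (F H2) b = 0)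
  (hF_ker : forall H, (forall b, F H b = 0) <-> (forall j, alphaf alpha j H = 0))
  (hF_v : forall H (i : 'I_r), F H (v i) = alphaf alpha i H *: v i) :
  let P := fun delta : 'I_r -> Alg -> Alg =>
    forall j : 'I_r, exists H : 'rV[R[i]]_(r + aff),
      (forall b, F H b = delta j b) /\ (forall i, alphaf alpha i H = A i j) in
  exists delta : 'I_r -> Alg -> Alg,
    [/\ P delta,
        (forall delta', P delta' -> forall j b, delta' j b = delta j b) &
        let Xp := Xpos v delta in
        let Xm := Xneg A F vinv delta in
        let N := cartan aff r in
        [/\ (* (a) *)
            (forall a b : 'I_(r + aff), forall x,
               comm (F (Hb a)) (F (Hb b)) x = 0),
            (* (b) *)
            (forall i x, comm (Xp i) (Xm i) x = F (Hb (lshift aff i)) x) /\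
            (forall i j, i != j -> forall x, comm (Xp i) (Xm j) x = 0),
            (* (c) *)
            (forall (a : 'I_(r + aff)) (j : 'I_r) x,
               comm (F (Hb a)) (Xp j) x = alphaf alpha j (Hb a) *: Xp j x) /\
            (forall (a : 'I_(r + aff)) (j : 'I_r) x,
               comm (F (Hb a)) (Xm j) x = - (alphaf alpha j (Hb a) *: Xm j x)),
            (* (d) *)
            (forall i j, i != j -> forall x,
               ad_pow `|1 - N i j|%N (Xp i) (Xp j) x = 0) &
            (* (e) *)
            (forall i j, i != j -> forall x,
               ad_pow `|1 - N i j|%N (Xm i) (Xm j) x = 0)]].
Proof.
move=> P.
have [Hpos alpha_Hpos] := alphaf_onto A halpha_indep.
have N_diag := @cartan_diag aff r.
have Xm_mulF := Xneg_mulF A vinv Hpos hF_lin.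
exists (fun j => F (Hpos j)); split.
- by move=> j; exists (Hpos j).
- move=> delta' hdelta' j b; have [H [<- alpha_H]] := hdelta' j.
  by apply: (F_eq_alphaf hF_lin hF_ker) => k; rewrite alpha_H alpha_Hpos.
move=> Xp Xm N; split.
- by move=> a b x; apply: hF_hom.
- split=> [i | i j ij] x; rewrite (comm_ext (frefl _) (Xm_mulF _)).
    by apply: Xpos_Xneg_bracket.
  by apply: Xpos_Xneg_bracket_offdiag.
- split=> a j x; last by apply: F_Xneg_bracket.
  exact: (comm_F_mulF hF_der hF_hom _ _ _ (weight_v hF_v j)).
- by move=> i j ij x; apply: (Xpos_serre N_diag hA hF_lin hF_der hF_hom hF_v).
- move=> i j ij x; rewrite (ad_pow_ext _ (Xm_mulF i) (Xm_mulF j)).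
  by apply: Xneg_serre.
Qed.
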